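(* There exists a constant $c>0$ such that for $p=p(n)\le c/n^2$ the following holds asymptotically almost surely: for every nonempty subset $F$ of the hyperedges of $\mathcal H=\mathcal H(\Gamma(n,p))$ there exist a vertex $v$ of $\mathcal H$ and a hyperedge $E\in F$ such that $E$ is the only hyperedge of $F$ containing $v$, and moreover $v$ is pivotal for $E$.
   Context: The random triangular group $\Gamma(n,p)$ is given by a presentation $\langle S\mid R\rangle$, where $|S|=n$ and $R$ contains independently, each with probability $p$, every cyclically reduced word $abc$ of length three over $S\cup S^{-1}$ ($a\neq b^{-1}$, $b\neq c^{-1}$, $c\neq a^{-1}$). Relations are classified: type 1 are words $aaa$ (with $a\in S\cup S^{-1}$); type 2 are words of the form $aab$, $aba$, $baa$ with $a\neq b$, in which $b$ is called pivotal; type 3 are words $abc$ with $a,b,c$ pairwise distinct letters, in which every element is pivotal. The random multi-hypergraph $\mathcal H(\Gamma(n,p))$ has vertex set $S$, and each relation $r\in R$ gives one hyperedge: if $r$ is of type 3, the 3-edge $E=\{a,b,c\}\subseteq S$ of the three generators such that $r$ is built from letters of $E\cup E^{-1}$, with all three vertices pivotal; if $r$ is of type 2, the 2-edge $E=\{a,b\}\subseteq S$ such that $r$ is built from letters of $E\cup E^{-1}$, with the generator corresponding to the pivotal letter of $r$ marked as pivotal for $E$; if $r$ is of type 1 ($r=aaa$ or $r=a^{-1}a^{-1}a^{-1}$ with $a\in S$), the 1-edge $\{a\}$. Asymptotically almost surely means with probability tending to $1$ as $n\to\infty$. *)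

From HB Require Import structures.
From mathcomp Require Import all_boot all_order all_algebra.
From mathcomp Require Import all_classical all_reals all_analysis.
Set Implicit Arguments. Unset Strict Implicit. Unset Printing Implicit Defensive.
Import Order.TTheory GRing.Theory Num.Theory.
Local Open Scope ring_scope.

(* A letter of S ∪ S^{-1} with S = 'I_n: (generator, is_inverse). *)
Definition letter (n : nat) := ('I_n * bool)%type.
Definition linv n (x : letter n) : letter n := (x.1, ~~ x.2).

Definition word (n : nat) := (letter n * letter n * letter n)%type.

Definition cyc_red n (w : word n) : bool :=
  let: (a, b, c) := w in
  [&& a != linv b, b != linv c & c != linv a].

Definition CR (n : nat) : {set word n} := [set w | cyc_red w].

Definition type3 n (w : word n) : bool :=
  let: (a, b, c) := w in [&& a != b, b != c & a != c].

(* x is a pivotal letter of w: in type 3 every letter; in type 2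
   (aab, aba, baa with a <> b) the letter b. *)
Definition piv_letter n (w : word n) (x : letter n) : bool :=
  let: (a, b, c) := w in
  (type3 w && (x \in [:: a; b; c])) ||
  [|| [&& a == b, c != a & x == c],
      [&& a == c, b != a & x == b]
    | [&& b == c, a != b & x == a]].

Definition verts n (w : word n) : pred 'I_n :=
  let: (a, b, c) := w in fun v => v \in [:: a.1; b.1; c.1].

Definition pivotal n (w : word n) (v : 'I_n) : bool :=
  [exists s : bool, piv_letter w (v, s)].

(* The event of Lemma 2.2, for a given set of relations R: every nonempty
   set F of hyperedges (hyperedges are indexed by relations, multi-hypergraph)
   has a vertex v and E in F with E the only hyperedge of F containing v,
   and v pivotal for E. *)
Definition good n (R : {set word n}) : bool :=
  [forall F : {set word n},
     ((F \subset R) && (F != finset.set0)) ==>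
     [exists v : 'I_n, [exists E in F,
        pivotal E v && [forall E' in F, verts E' v ==> (E' == E)]]]].

(* Probability of an event under Γ(n,p): each cyclically reduced word is in R
   independently with probability p. *)
Definition Pr (R : realType) (n : nat) (p : R) (A : pred {set word n}) : R :=
  \sum_(X : {set word n} | (X \subset CR n) && A X)
     p ^+ #|X| * (1 - p) ^+ (#|CR n| - #|X|).

From HB Require Import structures.
From mathcomp Require Import all_boot all_order all_algebra.
From mathcomp Require Import all_classical all_reals all_analysis.
From mathcomp Require Import ring lra zify Rstruct.
Import Order.TTheory GRing.Theory Num.Theory.
Import numFieldNormedType.Exports.
Local Open Scope ring_scope.
Set Implicit Arguments. Unset Strict Implicit. Unset Printing Implicit Defensive.

(* Charge each vertex of a hyperedge E once if it is pivotal for E and twice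
   otherwise; a hyperedge hands out at most 3.  In a nonempty family F without a
   vertex of degree one pivotal for its hyperedge, every vertex of F receives at
   least 2, so F spans at most 3|F|/2 vertices.  By the union bound, the failure
   probability is at most the sum of p^|F| over such dense families; as a set U
   of vertices carries at most 8|U|^3 relations and p <= c/n^2, this is O(1/n). *)

Lemma sum_subset_card (V : nmodType) (T : finType) (D : {set T}) (f : nat -> V) :
  \sum_(Y : {set T} | Y \subset D) f #|Y| = \sum_(k < #|D|.+1) f k *+ 'C(#|D|, k).
Proof.
rewrite (partition_big (fun Y : {set T} => (inord #|Y| : 'I_(#|D|.+1))) xpredT) //=.
apply: eq_bigr => k _.
rewrite (eq_bigr (fun _ => f k)); last first.
  by move=> Y /andP[YD /eqP <-]; rewrite inordK // ltnS subset_leq_card.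
rewrite sumr_const -cards_draws; congr (_ *+ _).
apply: eq_card => Y; rewrite !inE -topredE /=.
case YD: (Y \subset D) => //=.
have Y_lt : (#|Y| < #|D|.+1)%N by rewrite ltnS subset_leq_card.
apply/eqP/eqP => [<-|Yk]; first by rewrite inordK.
by apply: val_inj; rewrite /= inordK // Yk.
Qed.

Lemma sum_subset_binomial (R : comNzRingType) (T : finType) (D : {set T}) (p : R) :
  \sum_(Y : {set T} | Y \subset D) p ^+ #|Y| * (1 - p) ^+ (#|D| - #|Y|) = 1.
Proof.
rewrite (sum_subset_card _ (fun k => p ^+ k * (1 - p) ^+ (#|D| - k))).
transitivity ((1 - p + p) ^+ #|D|); last by rewrite subrK expr1n.
by rewrite exprDn; apply: eq_bigr => k _; rewrite mulrC.
Qed.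

Lemma sum_supset_binomial (R : comNzRingType) (T : finType) (A F : {set T}) (p : R) :
  F \subset A ->
  \sum_(X : {set T} | (X \subset A) && (F \subset X))
    p ^+ #|X| * (1 - p) ^+ (#|A| - #|X|) = p ^+ #|F|.
Proof.
move=> FA.
rewrite (reindex_onto (fun Y => F :|: Y) (fun X => X :\: F)); last first.
  move=> X /andP[_ FX]; apply/setP => x; rewrite !inE.
  by case xF: (x \in F) => //=; rewrite (fintype.subsetP FX).
transitivity (p ^+ #|F| * \sum_(Y : {set T} | Y \subset A :\: F)
   p ^+ #|Y| * (1 - p) ^+ (#|A :\: F| - #|Y|)); last first.
  by rewrite sum_subset_binomial mulr1.
rewrite mulr_sumr.
apply: eq_big => [Y|Y].
  apply/idP/idP.
  - case/andP=> /andP[FYA _] /eqP <-; apply/fintype.subsetP => x; rewrite !inE.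
    by case: (x \in F) => //= xY; apply: (fintype.subsetP FYA); rewrite inE xY orbT.
  - move=> /subsetDP[YA dYF].
    rewrite finset.subsetUl finset.subUset FA YA /=; apply/eqP/setP => x; rewrite !inE.
    case xY: (x \in Y); last by case: (x \in F).
    by rewrite orbT andbT (disjointFr dYF xY).
move=> /andP[_ /eqP YE].
have dYF : [disjoint Y & F].
  by rewrite -YE finset.disjoints_subset finset.setDE finset.subsetIr.
have cardFY : #|F :|: Y| = (#|F| + #|Y|)%N.
  by rewrite cardsU finset.setIC (disjoint_setI0 dYF) cards0 subn0.
rewrite cardFY exprD -mulrA; congr (_ * (_ * _ ^+ _)).
by rewrite cardsD (finset.setIidPr FA) subnDA.
Qed.

Section Probability.
Variables (R : realType) (n : nat) (p : R).
Hypothesis p01 : 0 <= p <= 1.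

Let weight (X : {set word n}) : R := p ^+ #|X| * (1 - p) ^+ (#|CR n| - #|X|).

Let weight_ge0 X : 0 <= weight X.
Proof. by have [p0 p1] := andP p01; rewrite mulr_ge0 ?exprn_ge0 ?subr_ge0. Qed.

Lemma Pr_ge0 (A : pred {set word n}) : 0 <= Pr p A.
Proof. by apply: sumr_ge0 => X _; apply: weight_ge0. Qed.

Lemma Pr_predC (A : pred {set word n}) : Pr p (predC A) = 1 - Pr p A.
Proof.
rewrite -(sum_subset_binomial (CR n) p) (bigID A) /= addrC addrK.
by apply: eq_bigl => X; rewrite andbC.
Qed.

Lemma Pr_le_sum_witnesses (A B : pred {set word n}) :
  (forall X, A X -> exists2 F : {set word n}, F \subset X & B F) ->
  Pr p A <= \sum_(F : {set word n} | (F \subset CR n) && B F) p ^+ #|F|.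
Proof.
move=> witness.
apply: (@le_trans _ _ (\sum_(X : {set word n} | X \subset CR n)
    \sum_(F : {set word n} | (F \subset X) && B F) weight X)).
  rewrite /Pr big_mkcondr /=; apply: ler_sum => X _.
  case: ifP => [/witness[F FX BF]|_]; last by apply: sumr_ge0.
  rewrite (bigD1 F) ?FX //= lerDl; exact: sumr_ge0.
rewrite (exchange_big_dep B) /=; last by move=> X F _ /andP[].
rewrite [X in _ <= X]big_mkcondl /=; apply: ler_sum => F BF.
case: ifP => [FC|FnC].
  by rewrite -(sum_supset_binomial p FC); under eq_bigl do rewrite BF andbT.
rewrite big_pred0 // => X; apply/negP => /andP[XC /andP[FX _]].
by rewrite (fintype.subset_trans FX XC) in FnC.
Qed.

End Probability.

Section Hyperedges.
Variable n : nat.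
Implicit Types (w E : word n) (F : {set word n}).

Definition vset w : {set 'I_n} := [set v | verts w v].
Definition nonpivotal w : {set 'I_n} := [set v in vset w | ~~ pivotal w v].
Definition vertices F : {set 'I_n} := \bigcup_(E in F) vset E.

Definition has_pivotal_leaf F : bool :=
  [exists v : 'I_n, [exists E in F,
     pivotal E v && [forall E' in F, verts E' v ==> (E' == E)]]].

Lemma vsetE (a b c : letter n) : vset (a, b, c) = [set a.1; b.1; c.1].
Proof. by apply/setP => v; rewrite !inE /= !in_cons in_nil orbF !orbA. Qed.

Lemma piv_letter_pivotal w (x : letter n) : piv_letter w x -> pivotal w x.1.
Proof. by case: x => v s pwx; apply/existsP; exists s. Qed.

Lemma card_vset_nonpivotal w : (#|vset w| + #|nonpivotal w| <= 3)%N.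
Proof.
have card_nonpiv : (#|nonpivotal w| <= #|vset w|)%N.
  by apply: subset_leq_card; apply/fintype.subsetP => v; rewrite inE => /andP[].
have pivot_pair (y z : letter n) : piv_letter w z ->
    vset w \subset [set y.1; z.1] -> (#|vset w| + #|nonpivotal w| <= 3)%N.
  move=> wz sub; rewrite -[3%N]/(2 + 1)%N; apply: leq_add.
    by apply: leq_trans (subset_leq_card sub) _; rewrite cards2 ltnS leq_b1.
  rewrite -(cards1 y.1); apply: subset_leq_card; apply/fintype.subsetP => v.
  rewrite inE => /andP[/(fintype.subsetP sub)]; rewrite !inE.
  by case/orP=> // /eqP ->; rewrite piv_letter_pivotal.
case: w pivot_pair card_nonpiv => [[a b] c] pivot_pair card_nonpiv.
case T3: (type3 (a, b, c)).
  have pivotal_type3 (x : letter n) : x \in [:: a; b; c] -> pivotal (a, b, c) x.1.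
    by move=> xw; apply: piv_letter_pivotal; move: T3 => /= T3; rewrite /= T3 xw.
  have -> : nonpivotal (a, b, c) = finset.set0.
    apply/setP => v; rewrite /nonpivotal vsetE !inE; apply/negbTE.
    rewrite negb_and negbK -implybE -!orbA; apply/implyP => /or3P[] /eqP ->;
      by apply: pivotal_type3; rewrite !inE eqxx ?orbT.
  rewrite cards0 addn0 vsetE; apply: leq_trans (leq_card_setU _ _) _.
  by rewrite cards2 cards1 addn1 !ltnS leq_b1.
move: T3; rewrite /= => T3.
have [eab | nab] := eqVneq a b.
  subst b; have [eac | nac] := eqVneq a c.
    subst c; apply: (leq_trans (leq_add (leqnn _) card_nonpiv)).
    by rewrite vsetE !finset.setUid cards1.
  apply: (pivot_pair a c); first by rewrite /= !eqxx (eq_sym c) nac ?orbT.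
  by rewrite vsetE finset.setUid.
have [ebc | nbc] := eqVneq b c.
  subst c; apply: (pivot_pair b a); first by rewrite /= !eqxx nab ?orbT.
  by rewrite vsetE -finset.setUA finset.setUid finset.setUC.
have eac : a = c by apply/eqP; move: T3; rewrite nab nbc /=; case: (a == c).
subst c; apply: (pivot_pair a b); first by rewrite /= !eqxx (eq_sym b) nab ?orbT.
by rewrite vsetE finset.setUAC finset.setUid.
Qed.

Local Open Scope nat_scope.

Definition charge E v : nat := 1 + (v \in nonpivotal E).

Lemma sum_charge E : \sum_(v in vset E) charge E v = #|vset E| + #|nonpivotal E|.
Proof.
rewrite big_split /= sum1_card; congr (_ + _).
rewrite -sum1_card big_mkcond [RHS]big_mkcond /=; apply: eq_bigr => v _.
by rewrite [v \in nonpivotal E]inE; case: (v \in vset E).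
Qed.

Lemma card_vertices_le F : ~~ has_pivotal_leaf F -> 2 * #|vertices F| <= 3 * #|F|.
Proof.
move=> no_leaf.
have charge_received v : v \in vertices F ->
    2 <= \sum_(E in F | v \in vset E) charge E v.
  case/bigcupP => E EF vE; rewrite (bigD1 E) /= ?EF ?vE //.
  rewrite /charge; case: (boolP (v \in nonpivotal E)) => [_|pivE]; first exact: leq_addr.
  have vpiv : pivotal E v by move: pivE; rewrite inE vE negbK.
  have /forallPn[E' ] : ~~ [forall E' in F, verts E' v ==> (E' == E)].
    by apply: contra no_leaf => leaf; apply/existsP; exists v; apply/existsP; exists E;
      rewrite EF vpiv.
  rewrite !negb_imply => /and3P[E'F vE' E'E].
  by rewrite (bigD1 E') /= ?E'F ?E'E ?inE ?vE' //; lia.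
rewrite mulnC -sum_nat_const.
apply: (@leq_trans (\sum_(v in vertices F) \sum_(E in F | v \in vset E) charge E v)).
  exact: leq_sum.
rewrite (exchange_big_dep (mem F)) /=; last by move=> v E _ /andP[].
rewrite mulnC -sum_nat_const; apply: leq_sum => E EF.
rewrite (eq_bigl (mem (vset E))) ?sum_charge ?card_vset_nonpivotal // => v /=.
rewrite EF /=; case vE: (v \in vset E); rewrite ?andbF ?andbT //.
by apply/bigcupP; exists E.
Qed.

Definition words_on (U : {set 'I_n}) : {set word n} := [set w in CR n | vset w \subset U].

Lemma card_words_on U : #|words_on U| <= 8 * #|U| ^ 3.
Proof.
pose L : {set letter n} := finset.setX U [set: bool].
have sub : words_on U \subset finset.setX (finset.setX L L) L.
  apply/fintype.subsetP => -[[a b] c]; rewrite !inE vsetE => /andP[_ abcU].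
  have inU x : x \in [set a.1; b.1; c.1] -> x \in U by apply: (fintype.subsetP abcU).
  by rewrite !inU // !inE eqxx ?orbT.
apply: leq_trans (subset_leq_card sub) _.
by rewrite !cardsX cardsT card_bool; apply: eq_leq; ring.
Qed.

Lemma not_good_witness X : ~~ good X ->
  exists2 F : {set word n}, F \subset X & (F != finset.set0) && ~~ has_pivotal_leaf F.
Proof.
by case/forallPn => F; rewrite negb_imply => /andP[/andP[FX Fn0] no_leaf]; exists F;
  rewrite ?Fn0.
Qed.

Definition dense_on (U : {set 'I_n}) F : bool :=
  [&& F \subset words_on U, 0 < #|F| & 2 * #|U| <= 3 * #|F|].

Lemma dense_on_vertices F : F \subset CR n -> F != finset.set0 ->
  ~~ has_pivotal_leaf F -> dense_on (vertices F) F.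
Proof.
move=> FC Fn0 no_leaf; apply/and3P; split; rewrite ?card_gt0 ?card_vertices_le //.
apply/fintype.subsetP => E EF; rewrite inE (fintype.subsetP FC _ EF).
by apply/fintype.subsetP => v vE; apply/bigcupP; exists E.
Qed.

End Hyperedges.

Lemma expR_half_le2 (R : realType) : expR (2^-1 : R) <= 2.
Proof.
have e0 := expR_gt0 (2^-1 : R).
by have := expR_ge1Dx (- 2^-1 : R); rewrite expRN -(ler_pM2r e0) mulVf ?gt_eqF //; lra.
Qed.

Lemma expR_natr_le (R : realType) k : expR (k%:R : R) <= 4 ^+ k.
Proof.
have -> : k%:R = (2 * k)%N%:R * 2^-1 :> R by rewrite natrM mulrAC divff ?mul1r.
have -> : 4 = 2 ^+ 2 :> R by rewrite expr2; lra.
by rewrite expRM_natl -exprM; apply: lerXn2r; rewrite ?nnegrE ?expR_ge0 ?expR_half_le2.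
Qed.

Section NatBounds.
Local Open Scope nat_scope.

Lemma leq_wexp2r e m k : m <= k -> m ^ e <= k ^ e.
Proof. by move=> mk; elim: e => // e IH; rewrite !expnS leq_mul. Qed.

Lemma ffact_leq_expn m e : m ^_ e <= m ^ e.
Proof.
elim: e m => // e IH m; rewrite ffactnS expnS leq_mul //.
by apply: leq_trans (IH _) (leq_wexp2r _ (leq_pred m)).
Qed.

Lemma bin_fact_leq_expn m e : 'C(m, e) * e`! <= m ^ e.
Proof. by rewrite bin_ffact ffact_leq_expn. Qed.

(* k^k / k! <= exp k <= 4^k, read in the real numbers. *)
Lemma expnn_leq_fact k : k ^ k <= 4 ^ k * k`!.
Proof.
case: k => [|k]; first by [].
rewrite -(ler_nat Rdefinitions.R) natrM !natrX.
have fact0 : (0 < k.+1`!%:R :> Rdefinitions.R)%R by rewrite ltr0n fact_gt0.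
rewrite -(@ler_pM2r _ (k.+1`!%:R)^-1) ?invr_gt0 // -mulrA divff ?gt_eqF // mulr1.
apply: le_trans (expR_natr_le _ k.+1).
by apply: le_trans (expR_ge1Dxn k (ler0n _ _)); rewrite lerDr.
Qed.

Lemma bin_expnn_leq_expn m u : 'C(m, u) * u ^ u <= 4 ^ u * m ^ u.
Proof.
apply: leq_trans (leq_mul (leqnn _) (expnn_leq_fact u)) _.
by rewrite mulnCA bin_ffact leq_mul // ffact_leq_expn.
Qed.

Lemma expn_trade_leq u n d : u <= n -> u < d -> n ^ u.+1 * u ^ d <= 2 ^ d * u ^ u * n ^ d.
Proof.
move=> un ud; set r := d - u.+1.
have split_d k : k ^ d = k ^ u.+1 * k ^ r by rewrite -expnD subnKC.
have u2 : u <= 2 ^ d.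
  by apply: leq_trans (ltnW (ltn_expl u (ltnSn 1))) (leq_pexp2l _ (ltnW ud)).
rewrite (split_d u) (split_d n) (expnSr u u).
apply: (@leq_trans (n ^ u.+1 * (u ^ u * 2 ^ d * n ^ r))).
  by rewrite leq_mul2l leq_mul ?leq_mul2l ?u2 ?orbT ?leq_wexp2r.
by apply: eq_leq; ring.
Qed.

Lemma bin_dense_leq n u e m : 0 < e -> 2 * u <= 3 * e -> u <= n -> m <= 8 * u ^ 3 ->
  'C(n, u) * 'C(m, e) * n * 2 ^ u * 2 ^ e <= 24576 ^ e * n ^ (2 * e).
Proof.
move=> e0 ue un m_le.
have P0 : 0 < e`! * u ^ u * e ^ e.
  by rewrite !muln_gt0 fact_gt0 !expn_gt0 e0 /=; case: u {ue un m_le}.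
rewrite -(leq_pmul2r P0).
have binm : 'C(m, e) * e`! <= (8 * u ^ 3) ^ e.
  exact: leq_trans (bin_fact_leq_expn m e) (leq_wexp2r e m_le).
have ue3 : 2 ^ e * u ^ (3 * e) <= 3 ^ e * u ^ (2 * e) * e ^ e.
  rewrite !expnM -!expnMn; apply: leq_wexp2r.
  rewrite (_ : 2 * u ^ 3 = u ^ 2 * (2 * u)); last by ring.
  rewrite (_ : 3 * u ^ 2 * e = u ^ 2 * (3 * e)); last by ring.
  by rewrite leq_mul2l ue orbT.
have u8 : 8 ^ u <= 64 ^ e.
  by rewrite (_ : 64 = 8 ^ 2) // -expnM leq_exp2l //; lia.
have trade : n ^ u.+1 * u ^ (2 * e) <= 4 ^ e * u ^ u * n ^ (2 * e).
  rewrite (_ : 4 ^ e = 2 ^ (2 * e)); last by rewrite expnM.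
  by apply: expn_trade_leq => //; lia.
apply: (@leq_trans (('C(n, u) * u ^ u) * ('C(m, e) * e`!) * e ^ e * (n * 2 ^ u * 2 ^ e))).
  by apply: eq_leq; ring.
apply: leq_trans (leq_mul (leq_mul (leq_mul (bin_expnn_leq_expn n u) binm)
  (expnn_leq_fact e)) (leqnn _)) _.
apply: (@leq_trans (8 ^ u * 32 ^ e * (2 ^ e * u ^ (3 * e)) * n ^ u.+1 * e`!)).
  apply: eq_leq.
  rewrite (_ : 8 ^ u = 4 ^ u * 2 ^ u); last by rewrite -expnMn.
  rewrite (_ : 32 ^ e = 8 ^ e * 4 ^ e); last by rewrite -expnMn.
  by rewrite expnMn expnM (expnS n); ring.
apply: leq_trans (leq_mul (leq_mul (leq_mul (leqnn _) ue3) (leqnn _)) (leqnn _)) _.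
apply: (@leq_trans (32 ^ e * 3 ^ e * e ^ e * e`! * (8 ^ u * (n ^ u.+1 * u ^ (2 * e))))).
  by apply: eq_leq; ring.
apply: leq_trans (leq_mul (leqnn _) (leq_mul u8 trade)) _.
apply: eq_leq; rewrite (_ : 24576 ^ e = 64 ^ e * 32 ^ e * 3 ^ e * 4 ^ e); last by rewrite -!expnMn.
by ring.
Qed.

End NatBounds.

Lemma sum_geometric_half_le2 (R : realType) m : \sum_(k < m) (2^-1 : R) ^+ k <= 2.
Proof.
have half_gt0 : (0 : R) < 2^-1 by rewrite invr_gt0.
have half_lt1 : `|2^-1 : R| < 1 by rewrite ger0_norm ?invf_lt1 ?ltr1n ?ltW.
have := geometric_le_lim m ler01 half_gt0 half_lt1.
rewrite seriesEord /= (_ : 1 - 2^-1 = 2^-1 :> R); last by lra.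
by rewrite invrK mul1r; under eq_bigr do rewrite /geometric /= mul1r.
Qed.

Section DenseFamilies.
Variables (R : realType) (n : nat) (p : R).
Hypotheses (n_gt0 : (0 < n)%N) (p_ge0 : 0 <= p) (p_small : p <= 24576%:R^-1 / n%:R ^+ 2).

Lemma dense_term_le u k m : (0 < k)%N -> (2 * u <= 3 * k)%N -> (u <= n)%N ->
  (m <= 8 * u ^ 3)%N ->
  p ^+ k *+ 'C(m, k) <= ('C(n, u)%:R * n%:R * 2 ^+ u)^-1 * 2^-1 ^+ k.
Proof.
move=> k_gt0 uk un m_le.
have := bin_dense_leq k_gt0 uk un m_le.
rewrite -(ler_nat R) !natrM !natrX => count_le.
have D0 : 0 < 24576%:R ^+ k * n%:R ^+ (2 * k) :> R by rewrite mulr_gt0 ?exprn_gt0 ?ltr0n.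
have b0 : 0 < 'C(n, u)%:R * n%:R * 2 ^+ u * 2 ^+ k :> R.
  by rewrite !mulr_gt0 ?exprn_gt0 ?ltr0n ?bin_gt0.
have pk : p ^+ k <= (24576%:R ^+ k * n%:R ^+ (2 * k))^-1.
  by rewrite exprM -exprMn -exprVn; apply: lerXn2r; rewrite ?nnegrE // invfM.
rewrite exprVn -invfM -mulr_natr.
apply: le_trans (ler_wpM2r (ler0n _ _) pk) _.
rewrite [_ * 'C(m, k)%:R]mulrC ler_pdivrMr // ler_pdivlMl //.
by apply: le_trans count_le; rewrite le_eqVlt; apply/orP; left; apply/eqP; ring.
Qed.

Lemma sum_no_pivotal_leaf_le :
  \sum_(F : {set word n} | (F \subset CR n) &&
          ((F != finset.set0) && ~~ has_pivotal_leaf F)) p ^+ #|F|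
    <= \sum_(U : {set 'I_n}) \sum_(F : {set word n} | dense_on U F) p ^+ #|F|.
Proof.
rewrite (partition_big (@vertices n) xpredT) //=; apply: ler_sum => U _.
rewrite big_mkcond [X in _ <= X]big_mkcond /=; apply: ler_sum => F _.
case: ifP => [/andP[/andP[FC /andP[Fn0 no_leaf]] /eqP <-]|_].
  by rewrite dense_on_vertices.
by case: ifP; rewrite ?exprn_ge0.
Qed.

Lemma sum_dense_on_le (U : {set 'I_n}) :
  \sum_(F : {set word n} | dense_on U F) p ^+ #|F|
    <= ('C(n, #|U|)%:R * n%:R * 2 ^+ #|U|)^-1 * 2.
Proof.
rewrite big_mkcondr /= (sum_subset_card (words_on U)
  (fun k => if (0 < k)%N && (2 * #|U| <= 3 * k)%N then p ^+ k else 0)) /=.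
apply: (@le_trans _ _ (\sum_(k < #|words_on U|.+1)
    ('C(n, #|U|)%:R * n%:R * 2 ^+ #|U|)^-1 * 2^-1 ^+ k)).
  apply: ler_sum => k _; case: ifP => [/andP[k_gt0 Uk]|_].
    apply: dense_term_le => //; last exact: card_words_on.
    by rewrite -[n in (_ <= n)%N]card_ord max_card.
  by rewrite mul0rn mulr_ge0 ?invr_ge0 ?mulr_ge0 ?exprn_ge0 ?invr_ge0.
by rewrite -mulr_sumr ler_wpM2l ?invr_ge0 ?mulr_ge0 ?exprn_ge0 ?sum_geometric_half_le2.
Qed.

Lemma sum_dense_le :
  \sum_(U : {set 'I_n}) \sum_(F : {set word n} | dense_on U F) p ^+ #|F| <= 4 / n%:R.
Proof.
apply: le_trans (ler_sum _ (fun U _ => sum_dense_on_le U)) _.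
rewrite (eq_bigl (fun U : {set 'I_n} => U \subset [set: 'I_n])); last first.
  by move=> U; rewrite finset.subsetT.
rewrite (sum_subset_card _ (fun k => ('C(n, k)%:R * n%:R * 2 ^+ k)^-1 * 2)) /=.
rewrite cardsT card_ord.
have n0 : n%:R != 0 :> R by rewrite pnatr_eq0 -lt0n.
rewrite (eq_bigr (fun k : 'I_n.+1 => 2 / n%:R * 2^-1 ^+ k)); last first.
  move=> k _; have Ck : 'C(n, k)%:R != 0 :> R by rewrite pnatr_eq0 -lt0n bin_gt0 -ltnS.
  by rewrite -mulr_natr exprVn; field; rewrite Ck n0 expf_neq0.
rewrite -mulr_sumr (_ : 4 / n%:R = 2 / n%:R * 2); last by field.
by rewrite ler_wpM2l ?divr_ge0 ?sum_geometric_half_le2.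
Qed.

End DenseFamilies.

Unset Implicit Arguments.
Local Open Scope classical_set_scope.

Theorem lemma2p2 (R : realType) :
  exists c : R, 0 < c /\
  forall p : nat -> R,
    (forall n, 0 <= p n <= 1) ->
    (exists N : nat, forall n : nat, (N <= n)%N -> p n <= c / (n%:R ^+ 2)) ->
    (fun n : nat => @Pr R n (p n) (@good n)) @ \oo --> (1 : R).
Proof.
exists 24576%:R^-1; split; first by rewrite invr_gt0 ltr0n.
move=> p p01 [N p_small]; apply/cvgrPdist_le => e e_gt0.
have bound_ge0 : 0 <= 4 / e by rewrite divr_ge0 // ltW.
exists (maxn (maxn N 1) (Num.bound (4 / e))) => // n /=.
rewrite !geq_max => /andP[/andP[Nn n_gt0] en].
have p_ge0 : 0 <= p n by case/andP: (p01 n).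
have failure_le : Pr (p n) (predC (@good n)) <= 4 / n%:R.
  apply: le_trans (Pr_le_sum_witnesses (p01 n) _) _; first exact: not_good_witness.
  exact: le_trans (sum_no_pivotal_leaf_le n p_ge0) (sum_dense_le n_gt0 p_ge0 (p_small n Nn)).
rewrite /= -Pr_predC ger0_norm ?Pr_ge0 //; apply: le_trans failure_le _.
have n_gt0R : (0 : R) < n%:R by rewrite ltr0n.
rewrite ler_pdivrMr // -ler_pdivrMl // mulrC.
by apply: le_trans (ltW (archi_boundP bound_ge0)) _; rewrite ler_nat.
Qed.
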